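(* Under the setting below, let $(x^*,z^*,s^* )$ with multiplier $\lambda^*$ for (C) (and nonnegative multipliers for the other constraints) be a KKT point of (P). Then for every $t$ with $(\beta_t,\theta_t)\in\Omega^{II}_t(\lambda^* )$ we have $(x_t^*,z_t^* )=(1,z^{II}_t(\lambda^* ))$, where $z^{II}_t(\lambda)=1-a_t(\beta_t,\lambda)$ and $\Omega^{II}_t(\lambda)=\Big\{(\beta,\theta):\beta>0,\ \theta>\frac{X_t(\lambda)}{u_t'(1)},\ \beta\ge\frac{p_tc_t+r_t\lambda}{c_te_t'(c_t)}\Big\}$.
   Context: Fix an integer $T\ge 1$, a data cap $Q>0$ and an overage fee $\pi>0$. For each $t\in\{1,\dots,T\}$ fix reals $d_t\ge 0$, $r_t\ge 0$, $c_t>0$, $p_t>0$, $\theta_t>0$, $\beta_t>0$ and functions $u_t,e_t:[0,\infty)\to\mathbb{R}$ such that: $u_t$ is continuous, increasing and strictly concave, differentiable on $(0,\infty)$, and $u_t':(0,\infty)\to(0,\infty)$ is a strictly decreasing bijection with inverse $u_t'^{-1}$; $e_t$ is increasing, strictly convex and continuously differentiable, and $e_t':[0,\infty)\to[0,\infty)$ is a strictly increasing bijection with inverse $e_t'^{-1}$. For $0\le z\le x\le 1$ let $\tilde f_t(x,z)=\theta_t u_t(x)-\beta_t e_t((x-z)c_t)-p_t c_t z$ and $\tilde h_t(x,z)=d_t x+r_t z$. Problem (P): maximize $\sum_{t=1}^T \tilde f_t(x_t,z_t)-\pi s$ over $x,z\in\mathbb{R}^T$, $s\in\mathbb{R}$,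 subject to $0\le z_t\le x_t\le 1$ for all $t$, $s\ge 0$, and (C): $s\ge \sum_{t=1}^T\tilde h_t(x_t,z_t)-Q$. A KKT point of (P) consists of a feasible $(x^*,z^*,s^* )$ and nonnegative Lagrange multipliers for all constraints satisfying stationarity of the Lagrangian and complementary slackness; $\lambda^*$ denotes the multiplier of (C) (the shadow price of wireless data). For $\lambda\ge 0$ and $\beta>0$ write $a_t(\beta,\lambda)=\frac{1}{c_t}\,e_t'^{-1}\!\Big(\frac{p_tc_t+r_t\lambda}{\beta c_t}\Big)$ and $X_t(\lambda)=p_tc_t+(d_t+r_t)\lambda$. *)

(* concrete reals R. Indices t range over {0,...,T-1}
   (the paper's {1,...,T} shifted by one). *)
From Stdlib Require Import Reals Lra.
Open Scope R_scope.

Definition cont_nonneg (f : R -> R) (x : R) : Prop :=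
  limit1_in f (fun y => 0 <= y) (f x) x.

(* f has derivative l at x relative to the domain [0,oo)
   (one-sided at x = 0, ordinary derivative for x > 0). *)
Definition deriv_nonneg (f : R -> R) (x l : R) : Prop :=
  limit1_in (fun y => (f y - f x) / (y - x)) (fun y => 0 <= y /\ y <> x) l x.

Definition sumT (T : nat) (g : nat -> R) : R := sum_f_R0 g (T - 1).

Definition htilde (d r : nat -> R) (t : nat) (xt zt : R) : R := d t * xt + r t * zt.

(* Lagrangian:
   L = sum_t f~_t(x_t,z_t) - pi s + lam (s - sum_t h~_t + Q) + mu s
       + sum_t [alpha_t (x_t - z_t) + gamma_t (1 - x_t) + nu_t z_t].
   Stationarity requires the partial derivatives to exist (for x_t this
   means u_t is differentiable at x_t relative to [0,oo)) and vanish. *)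
Definition KKT (T : nat) (Q pi : R) (d r c p theta beta : nat -> R)
  (u e de : nat -> R -> R) (x z : nat -> R) (s lam : R) : Prop :=
  exists (mu : R) (alpha gamma nu : nat -> R),
    (forall t, (t < T)%nat -> 0 <= z t /\ z t <= x t /\ x t <= 1) /\
    0 <= s /\
    s >= sumT T (fun t => htilde d r t (x t) (z t)) - Q /\
    0 <= lam /\ 0 <= mu /\
    (forall t, (t < T)%nat -> 0 <= alpha t /\ 0 <= gamma t /\ 0 <= nu t) /\
    (forall t, (t < T)%nat ->
       (exists g, deriv_nonneg (u t) (x t) g /\
          theta t * g - beta t * c t * de t ((x t - z t) * c t)
          - lam * d t + alpha t - gamma t = 0) /\
       beta t * c t * de t ((x t - z t) * c t) - p t * c t
          - lam * r t - alpha t + nu t = 0) /\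
    - pi + lam + mu = 0 /\
    (forall t, (t < T)%nat ->
       alpha t * (x t - z t) = 0 /\ gamma t * (1 - x t) = 0 /\ nu t * z t = 0) /\
    mu * s = 0 /\
    lam * (s - (sumT T (fun t => htilde d r t (x t) (z t)) - Q)) = 0.

Definition a_fun (r c p : nat -> R) (deinv : nat -> R -> R) (t : nat) (b lam : R) : R :=
  / c t * deinv t ((p t * c t + r t * lam) / (b * c t)).

Definition X_fun (d r c p : nat -> R) (t : nat) (lam : R) : R :=
  p t * c t + (d t + r t) * lam.

Definition zII (r c p beta : nat -> R) (deinv : nat -> R -> R) (t : nat) (lam : R) : R :=
  1 - a_fun r c p deinv t (beta t) lam.

Definition OmegaII (d r c p : nat -> R) (du de : nat -> R -> R) (t : nat) (lam : R)
  (b th : R) : Prop :=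
  b > 0 /\ th > X_fun d r c p t lam / du t 1 /\
  b >= (p t * c t + r t * lam) / (c t * de t (c t)).

From Stdlib Require Import Reals Lra Psatz.
Open Scope R_scope.

(* Everything is local to one period t.  Adding the two
   stationarity equations of the KKT system eliminates the multiplier alpha_t
   and gives  theta_t * g = X_t(lam) - nu_t + gamma_t,  where g is a right
   derivative of u_t at x_t.
   (1) If x_t < 1, then gamma_t = 0, and by concavity every right derivative of
       u_t at a point of [0,1) is at least u_t'(1); hence
       theta_t u_t'(1) <= X_t(lam), contradicting theta_t > X_t(lam)/u_t'(1).
       So x_t = 1.
   (2) With x_t = 1 the remaining stationarity equation reads
       beta_t c_t e_t'((1-z_t)c_t) = p_t c_t + r_t lam + alpha_t - nu_t.
       The case z_t = 1 is impossible because e_t'(0) = 0 and p_t c_t > 0, so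
       alpha_t = 0; if z_t > 0 then nu_t = 0, and if z_t = 0 the bound on beta_t
       in Omega^II forces nu_t = 0.  Inverting e_t' gives z_t = z^II_t(lam).
   The file first proves two facts on limits and concave functions
   (tangent-line bound, right derivatives dominate u'(1)), then the two
   per-period consequences (1) and (2), and finally the theorem. *)

Lemma limit_right_ge (F : R -> R) (D : R -> Prop) (l x0 m delta : R) :
  limit1_in F D l x0 -> 0 < delta ->
  (forall h, 0 < h -> D (x0 + h)) ->
  (forall h, 0 < h < delta -> m <= F (x0 + h)) ->
  m <= l.
Proof.
  intros Hlim Hdelta HD Hbound.
  apply Rnot_lt_le; intro Hlt.
  destruct (Hlim (m - l)) as [alp [Halp Hclose]]; [lra|].
  set (h := Rmin alp delta / 2).
  assert (Hmin : 0 < Rmin alp delta) by (apply Rmin_glb_lt; lra).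
  assert (Hh_alp : h < alp) by (pose proof (Rmin_l alp delta); unfold h; lra).
  assert (Hh_delta : h < delta) by (pose proof (Rmin_r alp delta); unfold h; lra).
  assert (Hh : 0 < h) by (unfold h; lra).
  specialize (Hclose (x0 + h)); simpl in Hclose; unfold Rdist in Hclose.
  assert (Hnear : Rabs (F (x0 + h) - l) < m - l).
  { apply Hclose; split; [now apply HD|].
    replace (x0 + h - x0) with h by ring; rewrite Rabs_right; lra. }
  apply Rabs_def2 in Hnear; specialize (Hbound h (conj Hh Hh_delta)); lra.
Qed.

Section ConcaveBounds.

Variables (f f' : R -> R).
Hypothesis f_derivable : forall y, 0 < y -> derivable_pt_lim f y (f' y).
Hypothesis f'_decreasing : forall y1 y2, 0 < y1 -> y1 < y2 -> f' y2 < f' y1.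
Hypothesis f_cont0 : cont_nonneg f 0.

Lemma tangent_bound : forall a b, 0 <= a -> a < b -> f' b * (b - a) <= f b - f a.
Proof.
  assert (Hpos : forall a b, 0 < a -> a < b -> f' b * (b - a) <= f b - f a).
  { intros a b Ha Hab.
    destruct (MVT_cor2 f f' a b Hab) as [xi [Hmvt Hxi]].
    { intros y Hy; apply f_derivable; lra. }
    rewrite Hmvt; assert (f' b < f' xi) by (apply f'_decreasing; lra); nra. }
  intros a b Ha Hab; destruct (Rle_lt_or_eq_dec 0 a Ha) as [Ha'|<-]; [now apply Hpos|].
  (* the case a = 0 is the limit of the case a > 0, by right-continuity at 0 *)
  set (gap := fun y => f b - f y - f' b * (b - y)).
  assert (Hgap : limit1_in gap (fun y => 0 <= y) (gap 0) 0).
  { apply limit_minus; [apply limit_minus; [apply (limit_free (fun _ => f b) _ 0)|exact f_cont0]|].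
    apply limit_mul; [apply (limit_free (fun _ => f' b) _ 0)|].
    apply limit_minus; [apply (limit_free (fun _ => b) _ 0)|apply lim_x]. }
  enough (0 <= gap 0) by (unfold gap in *; lra).
  apply (limit_right_ge gap _ _ 0 0 b Hgap Hab); [intros; lra|].
  intros h Hh; unfold gap; rewrite Rplus_0_l; pose proof (Hpos h b); lra.
Qed.

Lemma right_deriv_ge (x g m : R) :
  0 <= x -> x < m -> deriv_nonneg f x g -> f' m <= g.
Proof.
  intros Hx Hxm Hg.
  apply (limit_right_ge _ _ _ x _ (m - x) Hg); [lra|intros; split; lra|].
  intros h Hh.
  assert (Hslope : f' (x + h) * h <= f (x + h) - f x).
  { pose proof (tangent_bound x (x + h)) as Htan.
    replace (x + h - x) with h in Htan by ring; apply Htan; lra. }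
  assert (f' m < f' (x + h)) by (apply f'_decreasing; lra).
  replace (x + h - x) with h by ring.
  apply Rmult_le_reg_r with h; [lra|].
  unfold Rdiv; rewrite Rmult_assoc, Rinv_l by lra; nra.
Qed.

End ConcaveBounds.

Lemma increasing_zero_at_origin (f : R -> R) :
  (forall y1 y2, 0 <= y1 -> y1 < y2 -> f y1 < f y2) ->
  (forall y, 0 <= y -> 0 <= f y) ->
  (exists y, 0 <= y /\ f y = 0) -> f 0 = 0.
Proof.
  intros Hincr Hnn [y [Hy Hfy]].
  destruct (Rle_lt_or_eq_dec 0 y Hy) as [Hy'|<-]; [|exact Hfy].
  pose proof (Hincr 0 y (Rle_refl 0) Hy'); pose proof (Hnn 0 (Rle_refl 0)); lra.
Qed.

Lemma div_le_mul (a b q : R) : 0 < q -> a / q <= b -> a <= b * q.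
Proof.
  intros Hq Hab; pose proof (Rmult_le_compat_r q _ _ (Rlt_le _ _ Hq) Hab) as Hmul.
  unfold Rdiv in Hmul; rewrite Rmult_assoc, Rinv_l, Rmult_1_r in Hmul by lra; exact Hmul.
Qed.

Lemma div_lt_mul (a b q : R) : 0 < q -> a / q < b -> a < b * q.
Proof.
  intros Hq Hab; pose proof (Rmult_lt_compat_r q _ _ Hq Hab) as Hmul.
  unfold Rdiv in Hmul; rewrite Rmult_assoc, Rinv_l, Rmult_1_r in Hmul by lra; exact Hmul.
Qed.

Section OnePeriod.

(* The KKT data of a single period t, with x = x_t, z = z_t, and
   g a right derivative of u_t at x_t. *)
Variables (d r c p theta beta lam : R) (u du de deinv : R -> R).
Variables (x z g alpha gamma nu : R).

Hypothesis c_pos : 0 < c.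
Hypothesis p_pos : 0 < p.
Hypothesis r_nonneg : 0 <= r.
Hypothesis lam_nonneg : 0 <= lam.
Hypothesis feasible : 0 <= z /\ z <= x /\ x <= 1.
Hypothesis nu_nonneg : 0 <= nu.
Hypothesis alpha_nonneg : 0 <= alpha.
Hypothesis stat_z : beta * c * de ((x - z) * c) - p * c - lam * r - alpha + nu = 0.
Hypothesis slack_alpha : alpha * (x - z) = 0.
Hypothesis slack_nu : nu * z = 0.

Lemma period_full_use :
  0 < theta -> 0 <= gamma ->
  (forall y, 0 < y -> derivable_pt_lim u y (du y)) ->
  (forall y1 y2, 0 < y1 -> y1 < y2 -> du y2 < du y1) ->
  cont_nonneg u 0 -> 0 < du 1 ->
  deriv_nonneg u x g ->
  theta * g - beta * c * de ((x - z) * c) - lam * d + alpha - gamma = 0 ->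
  gamma * (1 - x) = 0 ->
  theta > (p * c + (d + r) * lam) / du 1 ->
  x = 1.
Proof.
  intros Htheta Hgamma Hu_der Hdu_decr Hu_cont Hdu1 Hg stat_x slack_gamma HOmega.
  destruct (Req_dec x 1) as [Hx|Hx]; [exact Hx|exfalso].
  assert (Hgamma0 : gamma = 0).
  { destruct (Rmult_integral _ _ slack_gamma); [assumption|lra]. }
  (* summing the stationarity equations eliminates alpha *)
  assert (Hsum : theta * g = p * c + (d + r) * lam - nu + gamma) by lra.
  assert (Hg1 : du 1 <= g) by (apply (right_deriv_ge u du) with x; auto; lra).
  assert (HX : p * c + (d + r) * lam < theta * du 1) by (apply div_lt_mul; lra).
  nra.
Qed.

Hypothesis x_one : x = 1.
Hypothesis beta_pos : 0 < beta.
Hypothesis de_incr : forall y1 y2, 0 <= y1 -> y1 < y2 -> de y1 < de y2.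
Hypothesis de_nonneg : forall y, 0 <= y -> 0 <= de y.
Hypothesis de_onto : forall w, 0 <= w -> exists y, 0 <= y /\ de y = w.
Hypothesis deinv_de : forall y, 0 <= y -> deinv (de y) = y.
Hypothesis beta_bound : beta >= (p * c + r * lam) / (c * de c).

Lemma period_marginal_cost : beta * c * de ((1 - z) * c) = p * c + r * lam.
Proof.
  subst x.
  assert (Hde0 : de 0 = 0) by (apply increasing_zero_at_origin; auto; apply de_onto; lra).
  assert (Hz1 : z <> 1).
  { intros ->; replace ((1 - 1) * c) with 0 in stat_z by ring; rewrite Hde0 in stat_z.
    assert (nu = 0) by lra; nra. }
  assert (Halpha : alpha = 0).
  { destruct (Rmult_integral _ _ slack_alpha); [assumption|lra]. }
  destruct (Req_dec z 0) as [->|Hz0].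
  - (* z = 0: the bound on beta in Omega^II rules out a positive nu *)
    replace ((1 - 0) * c) with c in * by ring.
    assert (0 < de c) by (pose proof (de_incr 0 c); lra).
    assert (p * c + r * lam <= beta * (c * de c)).
    { apply div_le_mul; [nra|lra]. }
    nra.
  - assert (nu = 0) by (destruct (Rmult_integral _ _ slack_nu); lra).
    lra.
Qed.

Lemma period_share_formula :
  z = 1 - / c * deinv ((p * c + r * lam) / (beta * c)).
Proof.
  assert (Hw : 0 <= (1 - z) * c) by (subst x; nra).
  replace ((p * c + r * lam) / (beta * c)) with (de ((1 - z) * c)).
  - rewrite deinv_de by exact Hw; field; lra.
  - rewrite <- period_marginal_cost; field; split; lra.
Qed.

End OnePeriod.

Theorem lemma2 (T : nat) (Q pi : R)
  (d r c p theta beta : nat -> R)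
  (u e du de deinv : nat -> R -> R)
  (x z : nat -> R) (s lam : R) :
  (1 <= T)%nat -> 0 < Q -> 0 < pi ->
  (forall t, (t < T)%nat ->
     0 <= d t /\ 0 <= r t /\ 0 < c t /\ 0 < p t /\ 0 < theta t /\ 0 < beta t) ->
  (* assumptions on u_t *)
  (forall t, (t < T)%nat ->
     (forall y, 0 <= y -> cont_nonneg (u t) y) /\
     (forall y1 y2, 0 <= y1 -> y1 < y2 -> u t y1 < u t y2) /\
     (forall y1 y2 a, 0 <= y1 -> 0 <= y2 -> y1 <> y2 -> 0 < a < 1 ->
        u t (a * y1 + (1 - a) * y2) > a * u t y1 + (1 - a) * u t y2) /\
     (forall y, 0 < y -> derivable_pt_lim (u t) y (du t y)) /\
     (forall y, 0 < y -> 0 < du t y) /\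
     (forall y1 y2, 0 < y1 -> y1 < y2 -> du t y2 < du t y1) /\
     (forall w, 0 < w -> exists y, 0 < y /\ du t y = w)) ->
  (* assumptions on e_t *)
  (forall t, (t < T)%nat ->
     (forall y1 y2, 0 <= y1 -> y1 < y2 -> e t y1 < e t y2) /\
     (forall y1 y2 a, 0 <= y1 -> 0 <= y2 -> y1 <> y2 -> 0 < a < 1 ->
        e t (a * y1 + (1 - a) * y2) < a * e t y1 + (1 - a) * e t y2) /\
     (forall y, 0 <= y -> deriv_nonneg (e t) y (de t y)) /\
     (forall y, 0 <= y -> cont_nonneg (de t) y) /\
     (forall y, 0 <= y -> 0 <= de t y) /\
     (forall y1 y2, 0 <= y1 -> y1 < y2 -> de t y1 < de t y2) /\
     (forall w, 0 <= w -> exists y, 0 <= y /\ de t y = w) /\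
     (forall w, 0 <= w -> 0 <= deinv t w /\ de t (deinv t w) = w) /\
     (forall y, 0 <= y -> deinv t (de t y) = y)) ->
  KKT T Q pi d r c p theta beta u e de x z s lam ->
  forall t, (t < T)%nat ->
    OmegaII d r c p du de t lam (beta t) (theta t) ->
    x t = 1 /\ z t = zII r c p beta deinv t lam.
Proof.
  intros _ _ _ Hpar Hu He HKKT t Ht [_ [Htheta_bound Hbeta_bound]].
  destruct (Hpar t Ht) as [_ [Hr [Hc [Hp [Htheta Hbeta]]]]].
  destruct (Hu t Ht) as [Hu_cont [_ [_ [Hu_der [Hdu_pos [Hdu_decr _]]]]]].
  destruct (He t Ht) as [_ [_ [_ [_ [Hde_nn [Hde_incr [Hde_onto [_ Hdeinv]]]]]]]].
  destruct HKKT as [mu [alpha [gamma [nu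
    [Hfeas [_ [_ [Hlam [_ [Hdual [Hstat [_ [Hslack _]]]]]]]]]]]]].
  destruct (Hdual t Ht) as [Halpha [Hgamma Hnu]].
  destruct (Hstat t Ht) as [[g [Hg Hstat_x]] Hstat_z].
  destruct (Hslack t Ht) as [Hsl_alpha [Hsl_gamma Hsl_nu]].
  assert (Hx : x t = 1).
  { assert (Hdu1 : 0 < du t 1) by (apply Hdu_pos; lra).
    apply period_full_use with (d := d t) (r := r t) (c := c t) (p := p t) (theta := theta t)
      (beta := beta t) (lam := lam) (u := u t) (du := du t) (de := de t) (z := z t) (g := g)
      (alpha := alpha t) (gamma := gamma t) (nu := nu t); auto.
    apply Hu_cont; lra. }
  split; [exact Hx|].
  unfold zII, a_fun.
  apply period_share_formula with (de := de t) (x := x t) (alpha := alpha t) (nu := nu t); auto.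
Qed.
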